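(* Let $\vdash$ be the logic determined by a finite set $\mathsf{M}$ of finite matrices. Then $\vdash$ is truth-equational if and only if there is a set of equations $\tau(x)$ such that for every $\langle\mathbf{B},G\rangle\in\mathrm{Mod}^{*}(\vdash)$ with $\mathbf{B}$ one-generated, and every $\langle\mathbf{A},F\rangle\in\mathsf{M}$, $G=\{b\in B:\mathbf{B}\vDash\tau(b)\}$ and $F\subseteq\{a\in A:\mathbf{A}/\Omega^{\mathbf{A}}F\vDash\tau(a/\Omega^{\mathbf{A}}F)\}$. In this case, one can take $\tau(x)$ to be the set of all equations $\epsilon(x)\approx\delta(x)$ such that $\epsilon^{\mathbf{A}/\Omega^{\mathbf{A}}F}(a/\Omega^{\mathbf{A}}F)=\delta^{\mathbf{A}/\Omega^{\mathbf{A}}F}(a/\Omega^{\mathbf{A}}F)$ for all $a\in F$ and all $\langle\mathbf{A},F\rangle\in\mathsf{M}$.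
   Context: A (logical) matrix is a pair $\langle \mathbf{A}, F\rangle$ with $\mathbf{A}$ an algebra and $F\subseteq A$. The Leibniz congruence $\Omega^{\mathbf{A}}F$ is the largest congruence of $\mathbf{A}$ for which $F$ is a union of blocks; the matrix is reduced if it is the identity. A logic is a substitution-invariant closure relation on formulas of a fixed algebraic language; a class $\mathsf{M}$ of matrices determines $\vdash_{\mathsf{M}}$: $\Gamma\vdash_{\mathsf{M}}\varphi$ iff for every $\langle\mathbf{A},F\rangle\in\mathsf{M}$ and every evaluation $f$ into $\mathbf{A}$, $f[\Gamma]\subseteq F$ implies $f(\varphi)\in F$. A model of $\vdash$ is a matrix $\langle\mathbf{B},G\rangle$ with $\vdash\subseteq\vdash_{\langle\mathbf{B},G\rangle}$; $\mathrm{Mod}^{*}(\vdash)$ is the class of reduced models. $\mathbf{B}\vDash\tau(b)$ means $\epsilon^{\mathbf{B}}(b)=\delta^{\mathbf{B}}(b)$ for every equation $\epsilon\approx\delta$ in $\tau$. $\vdash$ is truth-equational if there is a set of equations $\tau(x)$ such that $G=\{b\in B:\mathbf{B}\vDash\tau(b)\}$ for every $\langle\mathbf{B},G\rangle\in\mathrm{Mod}^{*}(\vdash)$. *)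

From Stdlib Require Import List ClassicalEpsilon.
From Stdlib Require Fin.
Set Implicit Arguments.

Record signature := { Op : Type ; ar : Op -> nat }.

Section AAL.
Context (S : signature).

(** Terms over a type of variables [V].  Formulas of the logic are [term nat]
    (countably many variables); one-variable terms are [term unit]. *)
Inductive term (V : Type) : Type :=
| Var : V -> term V
| App : forall f : Op S, (Fin.t (ar S f) -> term V) -> term V.

Record algebra := { car :> Type ; op : forall f : Op S, (Fin.t (ar S f) -> car) -> car }.

Fixpoint eval (A : algebra) (V : Type) (v : V -> A) (t : term V) : A :=
  match t with
  | Var x => v x
  | App f ts => op A f (fun i => eval A v (ts i))
  end.

Definition finite_algebra (A : algebra) : Prop := exists l : list A, forall a : A, In a l.

Definition one_generated (B : algebra) : Prop :=
  exists b : B, forall c : B, exists t : term unit, eval B (fun _ => b) t = c.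

Record matrix := { malg : algebra ; mfil : malg -> Prop }.

Definition congruence (A : algebra) (th : A -> A -> Prop) : Prop :=
  (forall a, th a a) /\ (forall a b, th a b -> th b a) /\
  (forall a b c, th a b -> th b c -> th a c) /\
  (forall f (xs ys : Fin.t (ar S f) -> A),
      (forall i, th (xs i) (ys i)) -> th (op A f xs) (op A f ys)).

Definition compatible (A : algebra) (th : A -> A -> Prop) (F : A -> Prop) : Prop :=
  forall a b, th a b -> F a -> F b.

(** The Leibniz congruence of [F]: the largest congruence compatible with [F],
    presented as the union of all such congruences (which is that largest one). *)
Definition Leibniz (A : algebra) (F : A -> Prop) (a b : A) : Prop :=
  exists th, congruence A th /\ compatible A th F /\ th a b.

Definition reduced (A : algebra) (F : A -> Prop) : Prop :=
  forall a b, Leibniz A F a b -> a = b.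

(** Quotient algebra A/th: carrier = the th-classes, operations computed on
    (chosen) representatives. It is the usual quotient when th is a congruence. *)
Section Quotient.
Context (A : algebra) (th : A -> A -> Prop).
Definition qcar : Type := { P : A -> Prop | exists a, P = th a }.
Definition qclass (a : A) : qcar := exist _ (th a) (ex_intro _ a eq_refl).
Definition qrep (c : qcar) : A :=
  proj1_sig (constructive_indefinite_description _ (proj2_sig c)).
Definition qop (f : Op S) (args : Fin.t (ar S f) -> qcar) : qcar :=
  qclass (op A f (fun i => qrep (args i))).
Definition quotient : algebra := {| car := qcar ; op := qop |}.
End Quotient.

Definition equation := (term unit * term unit)%type.
Definition sat (B : algebra) (tau : equation -> Prop) (b : B) : Prop :=
  forall e, tau e -> eval B (fun _ => b) (fst e) = eval B (fun _ => b) (snd e).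

Definition crel := (term nat -> Prop) -> term nat -> Prop.

Definition matrix_cons (m : matrix) : crel := fun Gamma phi =>
  forall v : nat -> malg m,
    (forall g, Gamma g -> mfil m (eval (malg m) v g)) -> mfil m (eval (malg m) v phi).

Definition logic_of (M : list matrix) : crel := fun Gamma phi =>
  forall m, In m M -> matrix_cons m Gamma phi.

Definition is_model (L : crel) (B : algebra) (G : B -> Prop) : Prop :=
  forall Gamma phi, L Gamma phi -> matrix_cons {| malg := B ; mfil := G |} Gamma phi.

Definition reduced_model (L : crel) (B : algebra) (G : B -> Prop) : Prop :=
  is_model L B G /\ reduced B G.

Definition truth_equational_by (L : crel) (tau : equation -> Prop) : Prop :=
  forall (B : algebra) (G : B -> Prop), reduced_model L B G ->
    forall b : B, G b <-> sat B tau b.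

Definition truth_equational (L : crel) : Prop :=
  exists tau, truth_equational_by L tau.

Definition lemma_condition (M : list matrix) (tau : equation -> Prop) : Prop :=
  (forall (B : algebra) (G : B -> Prop), reduced_model (logic_of M) B G ->
      one_generated B -> forall b : B, G b <-> sat B tau b) /\
  (forall m, In m M -> forall a : malg m, mfil m a ->
      sat (quotient (malg m) (Leibniz (malg m) (mfil m)))
          tau (@qclass (malg m) (Leibniz (malg m) (mfil m)) a)).

Definition tau_M (M : list matrix) : equation -> Prop := fun e =>
  forall m, In m M -> forall a : malg m, mfil m a ->
    let Q := quotient (malg m) (Leibniz (malg m) (mfil m)) in
    let q := @qclass (malg m) (Leibniz (malg m) (mfil m)) a in
    eval Q (fun _ => q) (fst e) = eval Q (fun _ => q) (snd e).

End AAL.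

(** The Leibniz congruence of [F] on [A] relates exactly the elements that [F]
    cannot tell apart in any formula context.  Hence, if [ε(a) Ω^A F δ(a)]
    for every [a ∈ F] in every matrix of [M], the rule
    [x, φ(ε(x), ȳ) ⊢ φ(δ(x), ȳ)] is valid in [M]; in a model [⟨B, G⟩] of the
    logic it then forces [ε(b) Ω^B G δ(b)] for every [b ∈ G], so in reduced
    models [G] is contained in the solutions of [τ_M].  Conversely, the second
    condition says that [τ ⊆ τ_M], so a solution [b] of [τ_M] solves [τ]; then
    so does the generator of the reduction of the subalgebra generated by [b],
    which is a one-generated reduced model, and the first condition puts it,
    hence [b], in the filter. *)

From Stdlib Require Import List Arith Lia.
From Stdlib Require Import ProofIrrelevance FunctionalExtensionality PropExtensionality ClassicalEpsilon.

Section AbstractAlgebraicLogic.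
Context {S : signature}.

Fixpoint subst {V W : Type} (sg : V -> term S W) (t : term S V) : term S W :=
  match t with
  | Var _ x => sg x
  | App f ts => App f (fun i => subst sg (ts i))
  end.

Lemma eval_ext (A : algebra S) {V : Type} (v w : V -> A) (t : term S V) :
  (forall x, v x = w x) -> eval A v t = eval A w t.
Proof. intro Hvw. f_equal. apply functional_extensionality, Hvw. Qed.

Lemma eval_subst (A : algebra S) {V W : Type} (sg : V -> term S W) (v : W -> A) (t : term S V) :
  eval A v (subst sg t) = eval A (fun x => eval A v (sg x)) t.
Proof.
  induction t as [x|f ts IH]; simpl; [reflexivity|].
  f_equal. apply functional_extensionality, IH.
Qed.

Definition upd {T : Type} (v : nat -> T) (k : nat) (s : T) : nat -> T :=
  fun n => if n =? k then s else v n.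

Lemma upd_same {T : Type} (v : nat -> T) (k : nat) : upd v k (v k) = v.
Proof.
  apply functional_extensionality; intro n; unfold upd.
  destruct (Nat.eqb_spec n k) as [->|_]; reflexivity.
Qed.

Definition hom (A B : algebra S) (h : A -> B) : Prop :=
  forall f xs, h (op A f xs) = op B f (fun i => h (xs i)).

Lemma eval_hom {A B : algebra S} {h : A -> B} {V : Type} (v : V -> A) (t : term S V) :
  hom A B h -> h (eval A v t) = eval B (fun x => h (v x)) t.
Proof.
  intro Hh. induction t as [x|f ts IH]; simpl; [reflexivity|].
  rewrite Hh. f_equal. apply functional_extensionality, IH.
Qed.

Lemma sat_hom {A B : algebra S} {h : A -> B} (tau : equation S -> Prop) (a : A) :
  hom A B h -> sat A tau a -> sat B tau (h a).
Proof.
  intros Hh Ha e He. rewrite <- !(eval_hom (fun _ => a)) by exact Hh.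
  f_equal. apply Ha, He.
Qed.

Lemma sat_embedding {A B : algebra S} {h : A -> B} (tau : equation S -> Prop) (a : A) :
  hom A B h -> (forall x y, h x = h y -> x = y) -> sat B tau (h a) -> sat A tau a.
Proof.
  intros Hh Hinj Ha e He. apply Hinj. rewrite !(eval_hom (fun _ => a)) by exact Hh.
  apply Ha, He.
Qed.

Lemma one_generated_image {A B : algebra S} {h : A -> B} :
  hom A B h -> (forall c, exists a, h a = c) -> one_generated A -> one_generated B.
Proof.
  intros Hh Hsurj [a Ha]. exists (h a). intro c.
  destruct (Hsurj c) as [a' <-]. destruct (Ha a') as [t <-].
  exists t. symmetry. apply eval_hom, Hh.
Qed.

Lemma is_model_preimage (L : crel S) {A B : algebra S} {h : A -> B} (G : B -> Prop) :
  hom A B h -> is_model L B G -> is_model L A (fun a => G (h a)).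
Proof.
  intros Hh HB Gamma phi HL v Hv; simpl in *.
  rewrite (eval_hom v phi Hh). apply (HB Gamma phi HL).
  intros g Hg; simpl. rewrite <- (eval_hom v g Hh). apply Hv, Hg.
Qed.

Lemma is_model_image (L : crel S) {A B : algebra S} {h : A -> B} (r : B -> A)
    (F : A -> Prop) (G : B -> Prop) :
  hom A B h -> (forall b, h (r b) = b) -> (forall a, G (h a) <-> F a) ->
  is_model L A F -> is_model L B G.
Proof.
  intros Hh Hr HG HA Gamma phi HL v Hv; simpl in *.
  assert (Ev : forall t, eval B v t = h (eval A (fun n => r (v n)) t)).
  { intro t. rewrite (eval_hom _ t Hh). apply eval_ext; intro; symmetry; apply Hr. }
  rewrite Ev, HG. apply (HA Gamma phi HL).
  intros g Hg; simpl. apply HG. rewrite <- Ev. apply Hv, Hg.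
Qed.

Lemma congruence_eval (A : algebra S) (th : A -> A -> Prop) {V : Type} (v w : V -> A) (t : term S V) :
  congruence A th -> (forall x, th (v x) (w x)) -> th (eval A v t) (eval A w t).
Proof.
  intros (_ & _ & _ & Hop) Hvw.
  induction t as [x|f ts IH]; simpl; auto.
Qed.

Section Indiscernibility.
Context (A : algebra S) (F : A -> Prop).

Definition indiscernible (s t : A) : Prop :=
  forall (phi : term S nat) (v : nat -> A) (k : nat),
    F (eval A (upd v k s) phi) <-> F (eval A (upd v k t) phi).

Lemma indiscernible_refl (a : A) : indiscernible a a.
Proof. intros phi v k; reflexivity. Qed.

Lemma indiscernible_eval (N : nat) (v w : nat -> A) (phi : term S nat) :
  (forall m, indiscernible (v m) (w m)) -> (forall m, N <= m -> v m = w m) ->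
  F (eval A v phi) <-> F (eval A w phi).
Proof.
  revert v w. induction N as [|N IH]; intros v w Hvw Hfar.
  - replace w with v; [reflexivity|].
    apply functional_extensionality; intro m; apply Hfar; lia.
  - rewrite <- (upd_same v N), (Hvw N phi v N). apply IH.
    + intro m; unfold upd.
      destruct (Nat.eqb_spec m N) as [->|_]; [apply indiscernible_refl|apply Hvw].
    + intros m Hm; unfold upd.
      destruct (Nat.eqb_spec m N) as [->|Hne]; [reflexivity|apply Hfar; lia].
Qed.

Definition prepend {n : nat} (zs : Fin.t n -> A) (v : nat -> A) : nat -> A :=
  fun m => match lt_dec m n with
           | left h => zs (Fin.of_nat_lt h)
           | right _ => v (m - n)
           end.

Lemma prepend_fin (n : nat) (zs : Fin.t n -> A) (v : nat -> A) (i : Fin.t n) :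
  prepend zs v (proj1_sig (Fin.to_nat i)) = zs i.
Proof.
  unfold prepend. destruct (Fin.to_nat i) as [j hj] eqn:Ei; simpl.
  destruct (lt_dec j n) as [h|h]; [|lia].
  rewrite <- (Fin.of_nat_to_nat_inv i), Ei. simpl. f_equal. apply Fin.of_nat_ext.
Qed.

Lemma prepend_shift (n : nat) (zs : Fin.t n -> A) (v : nat -> A) (m : nat) :
  prepend zs v (m + n) = v m.
Proof. unfold prepend. destruct (lt_dec (m + n) n); [lia|]. f_equal; lia. Qed.

(* Substituting [f(x_0, ..., x_{n-1})] for [x_k], after moving the other
   variables past [n], turns a change of all arguments of [f] into a change
   of finitely many variables. *)
Lemma indiscernible_op f (xs ys : Fin.t (ar S f) -> A) :
  (forall i, indiscernible (xs i) (ys i)) -> indiscernible (op A f xs) (op A f ys).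
Proof.
  intros Hxy phi v k.
  set (sg := fun m => if m =? k then App f (fun i => Var S (proj1_sig (Fin.to_nat i)))
                      else Var S (m + ar S f)).
  assert (Eval : forall zs, eval A (prepend zs v) (subst sg phi) = eval A (upd v k (op A f zs)) phi).
  { intro zs. rewrite eval_subst. apply eval_ext; intro m; unfold sg, upd.
    destruct (m =? k); simpl.
    - f_equal. apply functional_extensionality; intro i. apply prepend_fin.
    - apply prepend_shift. }
  rewrite <- !Eval. apply indiscernible_eval with (N := ar S f).
  - intro m; unfold prepend. destruct (lt_dec m (ar S f)); [apply Hxy|apply indiscernible_refl].
  - intros m Hm; unfold prepend. destruct (lt_dec m (ar S f)); [lia|reflexivity].
Qed.

Lemma indiscernible_congruence : congruence A indiscernible.
Proof.
  split; [exact indiscernible_refl|split; [|split]].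
  - intros a b Hab phi v k. symmetry. apply Hab.
  - intros a b c Hab Hbc phi v k. rewrite (Hab phi v k). apply Hbc.
  - exact indiscernible_op.
Qed.

Lemma indiscernible_compatible : compatible A indiscernible F.
Proof. intros a b Hab. exact (proj1 (Hab (Var S 0) (fun _ => a) 0)). Qed.

Lemma Leibniz_eq_indiscernible : Leibniz A F = indiscernible.
Proof.
  apply functional_extensionality; intro a; apply functional_extensionality; intro b.
  apply propositional_extensionality. split.
  - intros (th & Hth & Hcomp & Hab) phi v k.
    assert (Hphi : th (eval A (upd v k a) phi) (eval A (upd v k b) phi)).
    { apply congruence_eval; [exact Hth|]. intro m; unfold upd.
      destruct (m =? k); [exact Hab|apply (proj1 Hth)]. }
    destruct Hth as (_ & Hsym & _).
    split; apply Hcomp; auto.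
  - intro Hab. exists indiscernible.
    split; [exact indiscernible_congruence|split; [exact indiscernible_compatible|exact Hab]].
Qed.

Lemma Leibniz_congruence : congruence A (Leibniz A F).
Proof. rewrite Leibniz_eq_indiscernible. exact indiscernible_congruence. Qed.

Lemma Leibniz_compatible : compatible A (Leibniz A F) F.
Proof. rewrite Leibniz_eq_indiscernible. exact indiscernible_compatible. Qed.

Lemma Leibniz_filter_eval (a b : A) (phi : term S nat) (v : nat -> A) (k : nat) :
  Leibniz A F a b -> F (eval A (upd v k a) phi) -> F (eval A (upd v k b) phi).
Proof. rewrite Leibniz_eq_indiscernible. intro Hab. apply Hab. Qed.

End Indiscernibility.

Lemma Leibniz_preimage {A B : algebra S} {h : A -> B} (F : A -> Prop) (G : B -> Prop) (a b : A) :
  hom A B h -> (forall x, G (h x) <-> F x) -> Leibniz B G (h a) (h b) -> Leibniz A F a b.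
Proof.
  intros Hh HG Hab.
  destruct (Leibniz_congruence B G) as (Hr & Hs & Ht & Hop).
  exists (fun x y => Leibniz B G (h x) (h y)). repeat split.
  - intro x. apply Hr.
  - intros x y. apply Hs.
  - intros x y z. apply Ht.
  - intros f xs ys Hxy. rewrite !Hh. apply Hop, Hxy.
  - intros x y Hxy Fx. apply HG. apply (Leibniz_compatible B G _ _ Hxy), HG, Fx.
  - exact Hab.
Qed.

Section Quotient.
Context (A : algebra S) (th : A -> A -> Prop) (Hth : congruence A th).

Lemma qcar_eq (c d : qcar A th) : proj1_sig c = proj1_sig d -> c = d.
Proof. apply eq_sig_hprop. intro; apply proof_irrelevance. Qed.

Lemma qclass_eq (a b : A) : qclass A th a = qclass A th b <-> th a b.
Proof.
  destruct Hth as (Hr & Hs & Ht & _). split.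
  - intro Eab. apply (f_equal (@proj1_sig _ _)) in Eab. simpl in Eab.
    rewrite Eab. apply Hr.
  - intro Hab. apply qcar_eq; simpl. apply functional_extensionality; intro x.
    apply propositional_extensionality; split; eauto.
Qed.

Lemma qclass_qrep (c : qcar A th) : qclass A th (qrep c) = c.
Proof.
  apply qcar_eq; simpl. unfold qrep.
  destruct (constructive_indefinite_description _ _) as [a Ha]; simpl. auto.
Qed.

Lemma qclass_hom : hom A (quotient A th) (qclass A th).
Proof.
  intros f xs. apply qclass_eq. apply Hth. intro i.
  apply qclass_eq. symmetry. apply qclass_qrep.
Qed.

Lemma quotient_one_generated : one_generated A -> one_generated (quotient A th).
Proof.
  apply (one_generated_image qclass_hom).
  intro c. exists (qrep c). apply qclass_qrep.
Qed.

End Quotient.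

Section Reduction.
Context (A : algebra S) (F : A -> Prop).

Definition reduced_filter (c : quotient A (Leibniz A F)) : Prop := F (qrep c).

Lemma reduced_filter_qclass (a : A) : reduced_filter (qclass A (Leibniz A F) a) <-> F a.
Proof.
  pose proof (Leibniz_congruence A F) as Hc.
  assert (Ha : Leibniz A F (qrep (qclass A (Leibniz A F) a)) a).
  { apply (qclass_eq _ _ Hc). apply qclass_qrep. }
  destruct Hc as (_ & Hsym & _).
  split; apply (Leibniz_compatible A F); auto.
Qed.

Lemma reduction_reduced : reduced (quotient A (Leibniz A F)) reduced_filter.
Proof.
  pose proof (Leibniz_congruence A F) as Hc.
  intros c d Hcd.
  rewrite <- (qclass_qrep _ _ c), <- (qclass_qrep _ _ d).
  apply (qclass_eq _ _ Hc).
  apply (Leibniz_preimage _ _ _ _ (qclass_hom _ _ Hc) reduced_filter_qclass).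
  rewrite !qclass_qrep. exact Hcd.
Qed.

Lemma reduction_reduced_model (L : crel S) :
  is_model L A F -> reduced_model L (quotient A (Leibniz A F)) reduced_filter.
Proof.
  intro HA. pose proof (Leibniz_congruence A F) as Hc. split.
  - exact (is_model_image L (fun c : quotient A (Leibniz A F) => qrep c) F reduced_filter
             (qclass_hom _ _ Hc) (qclass_qrep _ _)
             reduced_filter_qclass HA).
  - exact reduction_reduced.
Qed.

End Reduction.

Section Subalgebra.
Context (B : algebra S) (P : B -> Prop)
  (HP : forall f xs, (forall i, P (xs i)) -> P (op B f xs)).

Definition subalgebra : algebra S :=
  {| car := {c : B | P c} ;
     op := fun f xs => exist P (op B f (fun i => proj1_sig (xs i)))
                             (HP f _ (fun i => proj2_sig (xs i))) |}.

Lemma proj1_sig_hom : hom subalgebra B (@proj1_sig B P).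
Proof. intros f xs. reflexivity. Qed.

End Subalgebra.

Definition term_value (B : algebra S) (b c : B) : Prop :=
  exists t : term S unit, eval B (fun _ => b) t = c.

Lemma term_value_closed (B : algebra S) (b : B) f (xs : Fin.t (ar S f) -> B) :
  (forall i, term_value B b (xs i)) -> term_value B b (op B f xs).
Proof.
  intro Hxs. destruct (choice (fun i t => eval B (fun _ => b) t = xs i) Hxs) as [ts Hts].
  exists (App f ts). simpl. f_equal. apply functional_extensionality, Hts.
Qed.

Definition generated (B : algebra S) (b : B) : algebra S :=
  subalgebra B (term_value B b) (term_value_closed B b).

Definition generator (B : algebra S) (b : B) : generated B b :=
  exist _ b (ex_intro _ (Var S tt) eq_refl).

Lemma generated_one_generated (B : algebra S) (b : B) : one_generated (generated B b).
Proof.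
  exists (generator B b). intros [c [t Ht]]. exists t.
  apply eq_sig_hprop; [intro; apply proof_irrelevance|].
  exact (eq_trans (eval_hom (fun _ => generator B b) t (proj1_sig_hom _ _ _)) Ht).
Qed.

Definition plug (phi : term S nat) (k : nat) (eps : term S unit) : term S nat :=
  subst (fun m => if m =? k then subst (fun _ => Var S 0) eps else Var S (Nat.succ m)) phi.

Lemma eval_plug (A : algebra S) (u : nat -> A) (phi : term S nat) (k : nat) (eps : term S unit) :
  eval A u (plug phi k eps)
  = eval A (upd (fun m => u (Nat.succ m)) k (eval A (fun _ => u 0) eps)) phi.
Proof.
  unfold plug. rewrite eval_subst. apply eval_ext; intro m; unfold upd.
  destruct (m =? k); [apply eval_subst|reflexivity].
Qed.

Lemma plug_rule_valid (m : matrix S) (eps del : term S unit) (phi : term S nat) (k : nat) :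
  (forall a, mfil m a ->
     Leibniz (malg m) (mfil m) (eval (malg m) (fun _ => a) eps) (eval (malg m) (fun _ => a) del)) ->
  matrix_cons m (fun g => g = Var S 0 \/ g = plug phi k eps) (plug phi k del).
Proof.
  intros Hed v Hv. rewrite eval_plug.
  apply (Leibniz_filter_eval _ _ (eval (malg m) (fun _ => v 0) eps)).
  - apply Hed, (Hv (Var S 0)). left; reflexivity.
  - rewrite <- eval_plug. apply Hv. right; reflexivity.
Qed.

Lemma model_matrix (M : list (matrix S)) (m : matrix S) :
  In m M -> is_model (logic_of M) (malg m) (mfil m).
Proof. intros Hm Gamma phi HL. specialize (HL m Hm). destruct m; exact HL. Qed.

Lemma tau_M_Leibniz (M : list (matrix S)) (e : equation S) :
  tau_M M e -> forall m, In m M -> forall a, mfil m a ->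
    Leibniz (malg m) (mfil m) (eval (malg m) (fun _ => a) (fst e)) (eval (malg m) (fun _ => a) (snd e)).
Proof.
  intros He m Hm a Ha. pose proof (Leibniz_congruence (malg m) (mfil m)) as Hc.
  apply (qclass_eq _ _ Hc). rewrite !(eval_hom (fun _ => a) _ (qclass_hom _ _ Hc)).
  exact (He m Hm a Ha).
Qed.

Lemma model_Leibniz_rule (M : list (matrix S)) (eps del : term S unit)
    (B : algebra S) (G : B -> Prop) (b : B) :
  (forall m, In m M -> forall a, mfil m a ->
     Leibniz (malg m) (mfil m) (eval (malg m) (fun _ => a) eps) (eval (malg m) (fun _ => a) del)) ->
  is_model (logic_of M) B G -> G b ->
  forall phi v k, G (eval B (upd v k (eval B (fun _ => b) eps)) phi) ->
                  G (eval B (upd v k (eval B (fun _ => b) del)) phi).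
Proof.
  intros Hed HB Gb phi v k Heps.
  set (u := fun n => match n with 0 => b | Datatypes.S n => v n end).
  pose proof (HB _ _ (fun m Hm => plug_rule_valid m eps del phi k (Hed m Hm)) u) as Hu.
  simpl in Hu. rewrite eval_plug in Hu. apply Hu.
  intros g [-> | ->]; [exact Gb|]. rewrite eval_plug. exact Heps.
Qed.

Lemma model_tau_M_Leibniz (M : list (matrix S)) (B : algebra S) (G : B -> Prop) (b : B) (e : equation S) :
  is_model (logic_of M) B G -> G b -> tau_M M e ->
  Leibniz B G (eval B (fun _ => b) (fst e)) (eval B (fun _ => b) (snd e)).
Proof.
  intros HB Gb He. pose proof (tau_M_Leibniz M e He) as Hed.
  assert (Hde : forall m, In m M -> forall a, mfil m a ->
    Leibniz (malg m) (mfil m) (eval (malg m) (fun _ => a) (snd e)) (eval (malg m) (fun _ => a) (fst e))).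
  { intros m Hm a Ha. destruct (Leibniz_congruence (malg m) (mfil m)) as (_ & Hsym & _).
    apply Hsym, Hed; assumption. }
  rewrite Leibniz_eq_indiscernible. intros phi v k.
  split; apply (model_Leibniz_rule M); assumption.
Qed.

Lemma reduced_model_sat_tau_M (M : list (matrix S)) (B : algebra S) (G : B -> Prop) (b : B) :
  reduced_model (logic_of M) B G -> G b -> sat B (tau_M M) b.
Proof. intros [HB Hred] Gb e He. apply Hred, (model_tau_M_Leibniz M); assumption. Qed.

Lemma model_filter_of_sat (L : crel S) (tau : equation S -> Prop) (B : algebra S) (G : B -> Prop) (b : B) :
  (forall (C : algebra S) (H : C -> Prop), reduced_model L C H -> one_generated C ->
     forall c, sat C tau c -> H c) ->
  is_model L B G -> sat B tau b -> G b.
Proof.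
  intros Hone HB Hb.
  set (C := generated B b). set (H := fun c : C => G (proj1_sig c)).
  assert (HC : is_model L C H) by exact (is_model_preimage L G (proj1_sig_hom _ _ _) HB).
  pose proof (Leibniz_congruence C H) as Hc.
  apply (reduced_filter_qclass C H (generator B b)).
  apply Hone.
  - apply reduction_reduced_model, HC.
  - apply quotient_one_generated; [exact Hc|apply generated_one_generated].
  - apply (sat_hom _ _ (qclass_hom _ _ Hc)).
    apply (sat_embedding _ _ (proj1_sig_hom _ _ _)); [|exact Hb].
    apply eq_sig_hprop. intro; apply proof_irrelevance.
Qed.

Lemma lemma_condition_of_truth_equational_by (M : list (matrix S)) (tau : equation S -> Prop) :
  truth_equational_by (logic_of M) tau -> lemma_condition M tau.
Proof.
  intro Htau. split.
  - intros B G HB _. exact (Htau B G HB).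
  - intros m Hm a Ha.
    apply (Htau _ _ (reduction_reduced_model _ _ _ (model_matrix M m Hm))).
    apply reduced_filter_qclass, Ha.
Qed.

Lemma truth_equational_by_tau_M (M : list (matrix S)) (tau : equation S -> Prop) :
  lemma_condition M tau -> truth_equational_by (logic_of M) (tau_M M).
Proof.
  intros [Hone Hfil] B G HB b. split.
  - apply reduced_model_sat_tau_M, HB.
  - intro Hb. apply (model_filter_of_sat (logic_of M) tau); [|apply HB|].
    + intros C H HC Hgen c. apply (Hone C H HC Hgen c).
    + intros e He. apply Hb. intros m Hm a Ha. exact (Hfil m Hm a Ha e He).
Qed.

End AbstractAlgebraicLogic.

Theorem lemma2p2 (S : signature) (M : list (matrix S))
  (HM : forall m, In m M -> finite_algebra (malg m)) :
  (truth_equational (logic_of M) <-> exists tau, lemma_condition M tau) /\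
  (truth_equational (logic_of M) ->
     truth_equational_by (logic_of M) (tau_M M) /\ lemma_condition M (tau_M M)).
Proof.
  split; [split|].
  - intros [tau Htau]. exists tau. exact (lemma_condition_of_truth_equational_by M tau Htau).
  - intros [tau Hcond]. exists (tau_M M). exact (truth_equational_by_tau_M M tau Hcond).
  - intros [tau Htau].
    assert (Htau_M := truth_equational_by_tau_M M tau
                        (lemma_condition_of_truth_equational_by M tau Htau)).
    split; [exact Htau_M|exact (lemma_condition_of_truth_equational_by M _ Htau_M)].
Qed.
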